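(* Let $\mathcal{E}$ be a metric space, $\lambda,\kappa,\mu\colon\mathcal{E}\to[0,\infty)$ continuous, $t\ge0$, and let $\{J_n\}_{n\in\mathbb{N}}$ be $\mathcal{E}$-valued càdlàg processes such that the laws $\nu_n$ of $\phi_t(J_n)$ on $\mathbb{R}$ satisfy a large deviations principle with rate function $\psi$. Then the set $\mathcal{R}(t)$ of attainable parameters at time $t$ is a non-empty closed subset of $[0,\infty)$ and $\{\gamma:\psi(\gamma)<\infty\}\subset\mathcal{R}(t)$.
   Context: $\phi_t(f)=\int_0^t\lambda(f(s))\exp(-\kappa(f(s))\int_s^t\mu(f(r))\,dr)\,ds$ for càdlàg $f\colon[0,\infty)\to\mathcal{E}$. A sequence of probability measures $\nu_n$ satisfies an LDP with rate function $\psi$ if $\psi\colon\mathbb{R}\to[0,\infty]$ is lower semicontinuous, $\limsup\frac1n\log\nu_n(F)\le-\inf_F\psi$ for closed $F$ and $\liminf\frac1n\log\nu_n(G)\ge-\inf_G\psi$ for open $G$. A number $\gamma\in[0,\infty)$ is an attainable parameter at time $t$ if for every $\epsilon>0$ there exists $N_\epsilon$ such that $\nu_n((\gamma-\epsilon,\gamma+\epsilon))>0$ for all $n\ge N_\epsilon$; $\mathcal{R}(t)$ denotes the set of such $\gamma$. *)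

From HB Require Import structures.
From mathcomp Require Import all_boot all_order all_algebra.
From mathcomp Require Import all_classical all_reals all_analysis.
Set Implicit Arguments. Unset Strict Implicit. Unset Printing Implicit Defensive.
Import Order.TTheory GRing.Theory Num.Theory.
Import numFieldNormedType.Exports.
Local Open Scope classical_set_scope.
Local Open Scope ring_scope.

Definition cadlag (R : realType) (E : topologicalType) (f : R -> E) : Prop :=
  (forall s : R, 0 <= s -> f x @[x --> s^'+] --> f s) /\
  (forall s : R, 0 < s -> exists l : E, f x @[x --> s^'-] --> l).

Definition phi (R : realType) (E : Type) (lam kap mu : E -> R) (t : R)
    (f : R -> E) : R :=
  Rintegral lebesgue_measure `[0, t]
    (fun s => lam (f s) *
       expR (- (kap (f s) * Rintegral lebesgue_measure `[s, t] (fun r => mu (f r))))).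

Definition LDP (R : realType) (nu : nat -> set R -> \bar R) (psi : R -> \bar R)
  : Prop :=
  (forall x, (0 <= psi x)%E) /\
  lower_semicontinuous psi /\
  (forall F : set R, closed F ->
     (limn_esup (fun n => (n%:R^-1)%:E * lne (nu n F)) <= - ereal_inf (psi @` F))%E) /\
  (forall G : set R, open G ->
     (- ereal_inf (psi @` G) <= limn_einf (fun n => (n%:R^-1)%:E * lne (nu n G)))%E).

Definition attainable (R : realType) (nu : nat -> set R -> \bar R) : set R :=
  [set gam : R | 0 <= gam /\
     forall eps : R, 0 < eps -> exists N : nat, forall n : nat, (N <= n)%N ->
       (0%E < nu n [set x : R | (gam - eps < x < gam + eps)%R])%E].

From HB Require Import structures.
From mathcomp Require Import all_boot all_order all_algebra.
From mathcomp Require Import all_classical all_reals all_analysis.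
From mathcomp Require Import lra.
Import Order.TTheory GRing.Theory Num.Theory.
Import numFieldNormedType.Exports.
Local Open Scope classical_set_scope.
Local Open Scope ring_scope.

(* The LDP lower bound on an open interval around a point of finite rate forbids
   the laws from vanishing there infinitely often, since that would push the
   liminf of (1/n) log nu_n down to -oo.  Hence every point of finite rate is
   attainable; such points exist because the upper bound on the whole line,
   which has mass one, gives inf psi <= 0.  Closedness of the attainable set
   holds for any sequence of monotone set functions: a point within eps/2 of
   an attainable point sees its eps/2-interval inside its own eps-interval. *)

Lemma limn_einf_scaled_lneNy (R : realType) (u : nat -> \bar R) :
  (forall N, exists2 n, (N <= n)%N & u n = 0%E) ->
  limn_einf (fun n => (n%:R^-1)%:E * lne (u n))%E = -oo%E.
Proof.
move=> u0_often; rewrite limn_einf_lim.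
set v := (fun n => _).
suff -> : einfs v = fun=> -oo%E by rewrite lim_cst.
apply/funext => N /=; have [n Nn un0] := u0_often N.+1.
apply/eqP; rewrite -leeNy_eq; apply: (@le_trans _ _ (v n)).
  by apply: ereal_inf_lbound; exists n => //=; exact: ltnW.
rewrite /v un0 le0_lneNy // gt0_muleNy // lte_fin invr_gt0 ltr0n.
exact: leq_ltn_trans Nn.
Qed.

Lemma limn_esup_cst (R : realType) (c : \bar R) : limn_esup (fun=> c) = c.
Proof. by rewrite limn_esup_lim; apply/cvg_lim => //; apply: cvg_esups; exact: cvg_cst. Qed.

Lemma measurable_preimage_itvoo d (Omega : measurableType d) (R : realType)
    (X : Omega -> R) (a b : R) :
  measurable_fun setT X -> measurable (X @^-1` [set x | a < x < b]).
Proof.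
move=> mX; rewrite -set_itvoo -[X in measurable X]setTI.
exact: mX (measurable_itv _).
Qed.

Section attainable_parameters.
Context (R : realType) (nu : nat -> set R -> \bar R) (psi : R -> \bar R).

Hypothesis nu_LDP : LDP nu psi.
Hypothesis nu_ge0 : forall n A, (0 <= nu n A)%E.
Hypothesis nu_itv_le : forall n (a b c e : R), c <= a -> b <= e ->
  (nu n [set x | (a < x < b)%R] <= nu n [set x | (c < x < e)%R])%E.
Hypothesis nu_setT : forall n, nu n setT = 1%E.
Hypothesis nu_lt0 : forall n, nu n [set x | x < 0] = 0%E.

Lemma LDP_open_not_null_often {G : set R} {gam : R} :
  open G -> G gam -> (psi gam < +oo)%E ->
  ~ (forall N, exists2 n, (N <= n)%N & nu n G = 0%E).
Proof.
move=> oG Ggam psi_fin null_often.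
have : (ereal_inf (psi @` G) < +oo)%E.
  by apply: le_lt_trans psi_fin; apply: ereal_inf_lbound; exists gam.
have := nu_LDP.2.2.2 G oG.
by rewrite limn_einf_scaled_lneNy // leeNy_eq eqe_oppLR /= => /eqP ->.
Qed.

Lemma finite_rate_attainable : [set gam | (psi gam < +oo)%E] `<=` attainable nu.
Proof.
move=> gam /= psi_fin; split.
  rewrite leNgt; apply/negP => gam_lt0.
  apply: (LDP_open_not_null_often (@open_lt R 0) gam_lt0 psi_fin) => N.
  by exists N => //; exact: nu_lt0.
move=> eps eps_gt0; apply: contrapT => not_eventually.
apply: (LDP_open_not_null_often (G := [set x | gam - eps < x < gam + eps]) _ _ psi_fin).
- by rewrite -set_itvoo; exact: itv_open.
- by apply/andP; split; lra.
move=> N; apply: contrapT => nonnull; apply: not_eventually; exists N => n Nn.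
rewrite lt0e nu_ge0 andbT; apply/eqP => nu0.
by apply: nonnull; exists n.
Qed.

Lemma attainable_neq0 : attainable nu !=set0.
Proof.
have := nu_LDP.2.2.1 setT closedT.
under eq_fun do rewrite nu_setT lne1 mule0.
rewrite limn_esup_cst leeNr oppe0 => inf_le0.
have /ereal_inf_lt[_ [gam _ <-] psi_lt1] : (ereal_inf (psi @` setT) < 1)%E.
  exact: le_lt_trans inf_le0 _.
by exists gam; apply: finite_rate_attainable; exact: lt_trans psi_lt1 (ltry _).
Qed.

Lemma attainable_closed : closed (attainable nu).
Proof.
move=> x clx; split.
  have : closure [set y : R | 0 <= y] x by apply: closureS clx => y [].
  by rewrite -(closure_id _).1 //; exact: closed_ge.
move=> eps eps_gt0.
have [y [[_ y_att] xy]] : attainable nu `&` ball x (eps / 2) !=set0.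
  by apply: clx; apply: nbhsx_ballx; lra.
move: xy; rewrite -ball_normE /ball_ /= => /ltr_normlP [xy yx].
have [N nu_pos] := y_att (eps / 2) ltac:(lra).
exists N => n Nn; apply: lt_le_trans (nu_pos n Nn) _.
by apply: nu_itv_le; lra.
Qed.

End attainable_parameters.

Theorem lemma1 (R : realType) (E : metricType R)
  (lam kap mu : E -> R)
  (lam_cont : continuous lam) (kap_cont : continuous kap) (mu_cont : continuous mu)
  (lam_ge0 : forall x, 0 <= lam x) (kap_ge0 : forall x, 0 <= kap x)
  (mu_ge0 : forall x, 0 <= mu x)
  (t : R) (t_ge0 : 0 <= t)
  (d : measure_display) (Omega : measurableType d) (P : probability Omega R)
  (J : nat -> Omega -> R -> E)
  (J_cadlag : forall n w, cadlag (J n w))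
  (phiJ_meas : forall n, measurable_fun setT (fun w => phi lam kap mu t (J n w)))
  (psi : R -> \bar R)
  (hLDP : LDP (fun n A => P ((fun w => phi lam kap mu t (J n w)) @^-1` A)) psi) :
  let Rt := attainable (fun n A => P ((fun w => phi lam kap mu t (J n w)) @^-1` A)) in
  Rt !=set0 /\ closed Rt /\ Rt `<=` `[0, +oo[ /\
  [set gam | (psi gam < +oo)%E] `<=` Rt.
Proof.
move=> Rt.
have phi_ge0 n w : 0 <= phi lam kap mu t (J n w).
  by apply: Rintegral_ge0 => s _; exact: mulr_ge0.
have itv_le n (a b c e : R) : c <= a -> b <= e ->
    (P ((fun w => phi lam kap mu t (J n w)) @^-1` [set x | (a < x < b)%R]) <=
     P ((fun w => phi lam kap mu t (J n w)) @^-1` [set x | (c < x < e)%R]))%E.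
  move=> ca be; apply: le_measure; rewrite ?inE.
  1, 2: exact/measurable_preimage_itvoo/phiJ_meas.
  by move=> w /= /andP[aw wb]; apply/andP; split; lra.
have nu_ge0 n A : (0 <= P ((fun w => phi lam kap mu t (J n w)) @^-1` A))%E.
  exact: measure_ge0.
have setT1 n : P ((fun w => phi lam kap mu t (J n w)) @^-1` setT) = 1%E.
  by rewrite preimage_setT probability_setT.
have lt0_null n : P ((fun w => phi lam kap mu t (J n w)) @^-1` [set x | x < 0]) = 0%E.
  suff -> : (fun w => phi lam kap mu t (J n w)) @^-1` [set x | x < 0] = set0.
    exact: measure0.
  by apply/seteqP; split => w //=; rewrite ltNge phi_ge0.
split; first exact: attainable_neq0 hLDP nu_ge0 setT1 lt0_null.
split; first exact: attainable_closed itv_le.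
split; first by move=> x [x_ge0 _]; rewrite /= in_itv /= andbT.
exact: finite_rate_attainable hLDP nu_ge0 lt0_null.
Qed.
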